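(* Let $M\ge 0$, $\mathcal{M}=\{0,\dots,M\}$, $T\ge 1$, $c_u,c_l>0$, $0\le\beta\le 1$, and let $P=(P_{i,j})_{i,j\in\mathcal{M}}$ be a stochastic matrix with rows $P_{i,\cdot}$. For a probability vector $b$ on $\mathcal{M}$ and $r\in\mathcal{M}$ let $$\bar C(b;r)=c_l\sum_{i=r}^{M} b(i)(i-r)+c_u\sum_{i=0}^{r-1} b(i)(r-i),$$ and, when $\sum_{j=r}^M b(j)>0$, let $T_r[b]$ be the probability vector with $T_r[b](i)=0$ for $i<r$ and $T_r[b](i)=b(i)/\sum_{j=r}^M b(j)$ for $i\ge r$ (viewed as a row vector, so $T_r[b]P$ is a probability vector). Define value functions on probability vectors recursively by $$V_T(b;r)=\bar C(b;r),\qquad V_t(b)=\min_{r\in\mathcal{M}}V_t(b;r),$$ $$V_t(b;r)=\bar C(b;r)+\beta\Big[\Big(\sum_{i=r}^M b(i)\Big)V_{t+1}(T_r[b]P)+\sum_{i=0}^{r-1} b(i)\,V_{t+1}(P_{i,\cdot})\Big],\quad t<T,$$ where the first term in brackets is taken to be $0$ when $\sum_{i=r}^M b(i)=0$. Then for every $t\in\{1,\dots,T\}$, every $r\in\mathcal{M}$, all probability vectors $b_1,b_2$ and every $\lambda\in[0,1]$, $$V_t(\lambda b_1+(1-\lambda)b_2;r)\ge \lambda V_t(b_1;r)+(1-\lambda)V_t(b_2;r),$$ $$V_t(\lambda b_1+(1-\lambda)b_2)\ge \lambda V_t(b_1)+(1-\lambda)V_t(b_2).$$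
   Context: This is the belief-based dynamic program for tracking a Markov chain $B_t$ on $\mathcal{M}$ with transition matrix $P$: choosing action $r$ costs $c_u(r-B_t)$ if $r>B_t$ (and then $B_t$ is fully observed) and $c_l(B_t-r)$ if $r\le B_t$ (and then only the event $B_t\ge r$ is observed); $b$ is the posterior distribution of the current state. *)

From mathcomp Require Import all_boot all_order all_algebra.
Set Implicit Arguments. Unset Strict Implicit. Unset Printing Implicit Defensive.
Import Order.TTheory GRing.Theory Num.Theory.
Local Open Scope ring_scope.

Section Defs.
Variables (R : realFieldType) (M : nat).
Notation S := 'I_M.+1.
Notation belief := {ffun S -> R}.

Definition prob_vec (b : belief) : Prop :=
  (forall i, 0 <= b i) /\ \sum_i b i = 1.

Definition stochastic (P : 'M[R]_M.+1) : Prop :=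
  (forall i j, 0 <= P i j) /\ (forall i, \sum_j P i j = 1).

Definition massge (b : belief) (r : S) : R := \sum_(i : S | (r <= i)%N) b i.

Definition Cbar (cu cl : R) (b : belief) (r : S) : R :=
  cl * (\sum_(i : S | (r <= i)%N) b i * (i%:R - r%:R))
  + cu * (\sum_(i : S | (i < r)%N) b i * (r%:R - i%:R)).

Definition Tr (b : belief) (r : S) : belief :=
  [ffun i : S => if (r <= i)%N then b i / massge b r else 0].

Definition bP (P : 'M[R]_M.+1) (b : belief) : belief :=
  [ffun j : S => \sum_i b i * P i j].

Definition rowP (P : 'M[R]_M.+1) (i : S) : belief := [ffun j => P i j].

Definition minr_act (f : S -> R) : R := \big[Order.min/f ord0]_(r : S) f r.

(* Vr n b r = V_{T-n}(b;r) : value function with n steps to go. *)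
Fixpoint Vr (cu cl beta : R) (P : 'M[R]_M.+1) (n : nat) (b : belief) (r : S)
  : R :=
  match n with
  | 0 => Cbar cu cl b r
  | n'.+1 =>
      let V' := fun b' => minr_act (Vr cu cl beta P n' b') in
      Cbar cu cl b r
      + beta * ((if massge b r > 0 then massge b r * V' (bP P (Tr b r)) else 0)
                + \sum_(i : S | (i < r)%N) b i * V' (rowP P i))
  end.

Definition Vtr cu cl beta P (T t : nat) b r := Vr cu cl beta P (T - t) b r.
Definition Vt cu cl beta P (T t : nat) b := minr_act (Vtr cu cl beta P T t b).

End Defs.

(* By backward induction, every V_t(.; r) is concave on the cone of
   nonnegative vectors.  The immediate cost and the terms for the fully
   observed states i < r are linear in b, and the remaining term
   b |-> m(b) V_{t+1}(T_r[b] P), with m(b) the mass of {i >= r}, is the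
   perspective of the concave function V_{t+1} composed with the linear map
   b |-> (b 1_{i >= r}) P, hence concave.  A pointwise minimum of concave
   functions is concave, which carries the induction from V_{t+1}(.; r) to
   V_{t+1} and then to V_t(.; r).  Working on the whole cone rather than the
   simplex lets a conditioned belief of zero mass enter as the zero vector. *)

From Pilot Require Import Defs.
From mathcomp Require Import all_boot all_order all_algebra.
From mathcomp Require Import ring.
Import Order.TTheory GRing.Theory Num.Theory.
Set Implicit Arguments. Unset Strict Implicit. Unset Printing Implicit Defensive.
Local Open Scope ring_scope.

Section BeliefConcavity.
Variables (R : realFieldType) (M : nat).
Notation S := 'I_M.+1.
Notation belief := {ffun S -> R}.

Definition mix (lam : R) (b1 b2 : belief) : belief :=
  [ffun i => lam * b1 i + (1 - lam) * b2 i].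

Definition nonneg_vec (b : belief) : Prop := forall i, 0 <= b i.

Definition concave_on_nonneg (V : belief -> R) : Prop :=
  forall b1 b2 lam, nonneg_vec b1 -> nonneg_vec b2 -> 0 <= lam <= 1 ->
  lam * V b1 + (1 - lam) * V b2 <= V (mix lam b1 b2).

Lemma nonneg_mix lam (b1 b2 : belief) :
  nonneg_vec b1 -> nonneg_vec b2 -> 0 <= lam <= 1 -> nonneg_vec (mix lam b1 b2).
Proof.
move=> b1_ge0 b2_ge0 /andP[lam_ge0 lam_le1] i; rewrite ffunE.
by rewrite addr_ge0 ?mulr_ge0 ?subr_ge0.
Qed.

Lemma sum_mix lam (b1 b2 : belief) (p : pred S) (f : S -> R) :
  \sum_(i | p i) mix lam b1 b2 i * f i =
  lam * \sum_(i | p i) b1 i * f i + (1 - lam) * \sum_(i | p i) b2 i * f i.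
Proof.
by rewrite !mulr_sumr -big_split; apply: eq_bigr => i _; rewrite ffunE /=; ring.
Qed.

Lemma massge_mix lam (b1 b2 : belief) r :
  massge (mix lam b1 b2) r = lam * massge b1 r + (1 - lam) * massge b2 r.
Proof.
by rewrite /massge !mulr_sumr -big_split; apply: eq_bigr => i _; rewrite ffunE.
Qed.

Lemma Cbar_mix cu cl lam (b1 b2 : belief) r :
  Cbar cu cl (mix lam b1 b2) r = lam * Cbar cu cl b1 r + (1 - lam) * Cbar cu cl b2 r.
Proof. by rewrite /Cbar !sum_mix; ring. Qed.

Lemma bP_mix (P : 'M[R]_M.+1) lam (b1 b2 : belief) :
  bP P (mix lam b1 b2) = mix lam (bP P b1) (bP P b2).
Proof. by apply/ffunP => j; rewrite !ffunE (sum_mix lam b1 b2 xpredT). Qed.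

Lemma massge_ge0 (b : belief) r : nonneg_vec b -> 0 <= massge b r.
Proof. by move=> b_ge0; apply: sumr_ge0. Qed.

(* Holds also when [massge b r = 0], where [Tr b r] is the zero vector. *)
Lemma massge_mulTr (b : belief) (r i : S) :
  nonneg_vec b -> (r <= i)%N -> massge b r * Tr b r i = b i.
Proof.
move=> b_ge0 le_ri; rewrite ffunE le_ri.
have [m0 | /negPf m_neq0] := eqVneq (massge b r) 0; last by rewrite mulrC divfK ?m_neq0.
by rewrite m0 mul0r (psumr_eq0P (fun j _ => b_ge0 j) m0).
Qed.

Lemma nonneg_bP_Tr (P : 'M[R]_M.+1) (b : belief) r :
  (forall i j, 0 <= P i j) -> nonneg_vec b -> nonneg_vec (bP P (Tr b r)).
Proof.
move=> P_ge0 b_ge0 j; rewrite ffunE; apply: sumr_ge0 => i _.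
rewrite mulr_ge0 // ffunE; case: ifP => // _.
by rewrite divr_ge0 ?massge_ge0.
Qed.

Lemma Tr_mix lam (b1 b2 : belief) r :
  nonneg_vec b1 -> nonneg_vec b2 -> 0 < massge (mix lam b1 b2) r ->
  Tr (mix lam b1 b2) r =
  mix (lam * massge b1 r / massge (mix lam b1 b2) r) (Tr b1 r) (Tr b2 r).
Proof.
move=> b1_ge0 b2_ge0 m_gt0; apply/ffunP => i.
rewrite [in RHS]ffunE; case: (boolP (r <= i)%N) => le_ri; last first.
  by rewrite !ffunE (negPf le_ri) !mulr0 addr0.
rewrite [LHS]ffunE le_ri [mix _ _ _ i]ffunE.
rewrite -(massge_mulTr b1_ge0 le_ri) -(massge_mulTr b2_ge0 le_ri).
move: m_gt0; rewrite massge_mix => m_gt0.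
by field; rewrite gt_eqF.
Qed.

Lemma concave_massge_perspective (P : 'M[R]_M.+1) (V : belief -> R) r :
  (forall i j, 0 <= P i j) -> concave_on_nonneg V ->
  concave_on_nonneg (fun b => massge b r * V (bP P (Tr b r))).
Proof.
move=> P_ge0 V_conc b1 b2 lam b1_ge0 b2_ge0 lam01 /=.
have /andP[lam_ge0 lam_le1] := lam01.
have w1_ge0 : 0 <= lam * massge b1 r by rewrite mulr_ge0 ?massge_ge0.
have w2_ge0 : 0 <= (1 - lam) * massge b2 r by rewrite mulr_ge0 ?massge_ge0 ?subr_ge0.
have [m0 | m_gt0] := eqVneq (massge (mix lam b1 b2) r) 0.
  rewrite m0 mul0r; move: m0; rewrite massge_mix => /eqP.
  rewrite paddr_eq0 // => /andP[/eqP w1 /eqP w2].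
  by rewrite !mulrA w1 w2 !mul0r addr0.
have {}m_gt0 : 0 < massge (mix lam b1 b2) r.
  by rewrite lt_def m_gt0 massge_ge0 //; apply: nonneg_mix.
set mu := lam * massge b1 r / massge (mix lam b1 b2) r.
have mu01 : 0 <= mu <= 1.
  by rewrite divr_ge0 ?(ltW m_gt0) //= ler_pdivrMr // mul1r massge_mix lerDl.
have V_mix := V_conc _ _ _ (nonneg_bP_Tr r P_ge0 b1_ge0) (nonneg_bP_Tr r P_ge0 b2_ge0) mu01.
rewrite Tr_mix // bP_mix; apply: le_trans (ler_wpM2l (ltW m_gt0) V_mix).
rewrite le_eqVlt; apply/predU1l.
move: m_gt0; rewrite /mu massge_mix => m_gt0.
by field; rewrite gt_eqF.
Qed.

Lemma concave_on_nonneg_linear (f : belief -> R) :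
  (forall b1 b2 lam, f (mix lam b1 b2) = lam * f b1 + (1 - lam) * f b2) ->
  concave_on_nonneg f.
Proof. by move=> f_lin b1 b2 lam _ _ _; rewrite f_lin. Qed.

Lemma concave_on_nonnegD (f g : belief -> R) :
  concave_on_nonneg f -> concave_on_nonneg g -> concave_on_nonneg (fun b => f b + g b).
Proof.
move=> f_conc g_conc b1 b2 lam b1_ge0 b2_ge0 lam01.
apply: le_trans (lerD (f_conc _ _ _ b1_ge0 b2_ge0 lam01) (g_conc _ _ _ b1_ge0 b2_ge0 lam01)).
by rewrite le_eqVlt; apply/predU1l; ring.
Qed.

Lemma concave_on_nonnegZ (c : R) (f : belief -> R) :
  0 <= c -> concave_on_nonneg f -> concave_on_nonneg (fun b => c * f b).
Proof.
move=> c_ge0 f_conc b1 b2 lam b1_ge0 b2_ge0 lam01.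
apply: le_trans (ler_wpM2l c_ge0 (f_conc _ _ _ b1_ge0 b2_ge0 lam01)).
by rewrite le_eqVlt; apply/predU1l; ring.
Qed.

Lemma concave_on_nonneg_eq (f g : belief -> R) :
  (forall b, nonneg_vec b -> f b = g b) -> concave_on_nonneg g -> concave_on_nonneg f.
Proof.
move=> fg g_conc b1 b2 lam b1_ge0 b2_ge0 lam01.
rewrite !fg //; first exact: g_conc.
exact: nonneg_mix.
Qed.

Lemma concave_on_nonneg_min (f : belief -> S -> R) :
  (forall r, concave_on_nonneg (f ^~ r)) -> concave_on_nonneg (fun b => minr_act (f b)).
Proof.
move=> f_conc b1 b2 lam b1_ge0 b2_ge0 lam01; have /andP[lam_ge0 lam_le1] := lam01.
have below r : lam * minr_act (f b1) + (1 - lam) * minr_act (f b2) <= f (mix lam b1 b2) r.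
  apply: le_trans (f_conc r _ _ _ b1_ge0 b2_ge0 lam01).
  by rewrite lerD // ler_wpM2l ?subr_ge0 // bigmin_le.
by apply: le_bigmin => // r _.
Qed.

Lemma concave_Cbar cu cl r : concave_on_nonneg (Cbar cu cl ^~ r).
Proof. by apply: concave_on_nonneg_linear => *; apply: Cbar_mix. Qed.

Section ValueFunctions.
Variables (cu cl beta : R) (P : 'M[R]_M.+1).
Hypotheses (beta_ge0 : 0 <= beta) (P_ge0 : forall i j, 0 <= P i j).

Let V n (b : belief) := minr_act (Vr cu cl beta P n b).

Lemma VrS_nonneg n (b : belief) r : nonneg_vec b ->
  Vr cu cl beta P n.+1 b r =
  Cbar cu cl b r + beta * (massge b r * V n (bP P (Tr b r))
                           + \sum_(i : S | (i < r)%N) b i * V n (Defs.rowP P i)).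
Proof.
move=> b_ge0 /=; congr (_ + beta * (_ + _)).
have [// | m_le0] := ltrP 0 (massge b r).
have -> : massge b r = 0 by apply/le_anti; rewrite m_le0 massge_ge0.
by rewrite mul0r.
Qed.

Lemma concave_Vr n r : concave_on_nonneg (Vr cu cl beta P n ^~ r).
Proof.
elim: n r => [|n IH] r; first exact: concave_Cbar.
have V_conc : concave_on_nonneg (V n) := concave_on_nonneg_min IH.
apply: concave_on_nonneg_eq (VrS_nonneg n ^~ r) _.
apply: concave_on_nonnegD; first exact: concave_Cbar.
apply: concave_on_nonnegZ => //.
apply: concave_on_nonnegD; first exact: concave_massge_perspective.
by apply: concave_on_nonneg_linear => *; apply: sum_mix.
Qed.

End ValueFunctions.
End BeliefConcavity.

Theorem lemma3 (R : realFieldType) (M T : nat) (cu cl beta : R)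
  (P : 'M[R]_M.+1) :
  (1 <= T)%N -> 0 < cu -> 0 < cl -> 0 <= beta <= 1 -> stochastic P ->
  forall (t : nat), (1 <= t <= T)%N ->
  forall (b1 b2 : {ffun 'I_M.+1 -> R}) (lam : R),
  prob_vec b1 -> prob_vec b2 -> 0 <= lam <= 1 ->
  (forall r : 'I_M.+1,
     Vtr cu cl beta P T t [ffun i => lam * b1 i + (1 - lam) * b2 i] r
     >= lam * Vtr cu cl beta P T t b1 r + (1 - lam) * Vtr cu cl beta P T t b2 r)
  /\
  Vt cu cl beta P T t [ffun i => lam * b1 i + (1 - lam) * b2 i]
     >= lam * Vt cu cl beta P T t b1 + (1 - lam) * Vt cu cl beta P T t b2.
Proof.
move=> _ _ _ /andP[beta_ge0 _] [P_ge0 _] t _ b1 b2 lam [b1_ge0 _] [b2_ge0 _] lam01.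
have Vtr_conc r : concave_on_nonneg (Vtr cu cl beta P T t ^~ r).
  exact: concave_Vr.
split; first by move=> r; exact: Vtr_conc.
exact: concave_on_nonneg_min Vtr_conc _ _ _ b1_ge0 b2_ge0 lam01.
Qed.
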